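(* Let $Z=\operatorname{diag}(z_1,\dots,z_N)$ with distinct real $z_i$, and let $\bm w_1,\bm w_2,\bm v_1\in\mathbb{R}^N$ satisfy $\bm w_1^T\bm v_1=1$, $\bm w_2^T\bm v_1=0$, $\bm w_2^TZ\bm v_1=1$. Run the following recursion: $b_0=\bm w_1^TZ\bm v_1$; $\bm v_2=Z\bm v_1-b_0\bm v_1$; $b_1=\bm w_2^TZ\bm v_2$, $c_1=\bm w_1^TZ\bm v_2$; $\bm v_3=Z\bm v_2-b_1\bm v_2-c_1\bm v_1$; $\hat{\bm w}_3=Z\bm w_1-c_1\bm w_2-b_0\bm w_1$; $d_2=\bm w_1^TZ\bm v_3$, $\bm w_3=\hat{\bm w}_3/d_2$; then for $n=3,\dots,N-1$: $b_{n-1}=\bm w_n^TZ\bm v_n$, $c_{n-1}=\bm w_{n-1}^TZ\bm v_n$, $\bm v_{n+1}=Z\bm v_n-b_{n-1}\bm v_n-c_{n-1}\bm v_{n-1}-d_{n-1}\bm v_{n-2}$, $\hat{\bm w}_{n+1}=Z\bm w_{n-1}-c_{n-1}\bm w_n-b_{n-2}\bm w_{n-1}-\bm w_{n-2}$, $d_n=\bm w_{n-1}^TZ\bm v_{n+1}$, $\bm w_{n+1}=\hat{\bm w}_{n+1}/d_n$; finally $b_{N-1}=\bm w_N^TZ\bm v_N$, $c_{N-1}=\bm w_{N-1}^TZ\bm v_N$. Suppose no breakdown occurs, i.e. $d_n\neq0$ for all $n=2,\dots,N-1$. Then the following inverse eigenvalue problem has a unique solution: find $W,V,H\in\mathbb{R}^{N\times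 N}$ with $H$ banded upper Hessenberg of the form $H_{i,i}=b_{i-1}$, $H_{i+1,i}=1$, $H_{i,i+1}=c_i$, $H_{i,i+2}=d_{i+1}$ (all other entries zero), such that (D1) the first two columns of $W$ are $\bm w_1,\bm w_2$ and the first column of $V$ is $\bm v_1$; (D2) $W^TV=I_N$; (D3) $W^TZV=H$. Moreover this solution is $W=[\bm w_1,\dots,\bm w_N]$, $V=[\bm v_1,\dots,\bm v_N]$ and $H$ with the coefficients produced by the recursion. *)

From mathcomp Require Import all_boot all_order all_algebra.
Set Implicit Arguments. Unset Strict Implicit. Unset Printing Implicit Defensive.
Import Order.TTheory GRing.Theory Num.Theory.
Local Open Scope ring_scope.

Definition dotv (R : ringType) (N : nat) (u v : 'cV[R]_N) : R := (u^T *m v) 0 0.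

Definition diagZ (R : ringType) (N : nat) (z : 'I_N -> R) : 'M[R]_N :=
  diag_mx (\row_i z i).

Section Recursion.
Variables (R : fieldType) (N : nat) (Z : 'M[R]_N) (w1 w2 v1 : 'cV[R]_N).

Definition b0 : R := dotv w1 (Z *m v1).
Definition v2 : 'cV[R]_N := Z *m v1 - b0 *: v1.
Definition b1 : R := dotv w2 (Z *m v2).
Definition c1 : R := dotv w1 (Z *m v2).
Definition v3 : 'cV[R]_N := Z *m v2 - b1 *: v2 - c1 *: v1.
Definition w3hat : 'cV[R]_N := Z *m w1 - c1 *: w2 - b0 *: w1.
Definition d2 : R := dotv w1 (Z *m v3).
Definition w3 : 'cV[R]_N := d2^-1 *: w3hat.

(* state at stage n >= 3:
   (v_{n-2}, v_{n-1}, v_n, w_{n-2}, w_{n-1}, w_n, b_{n-2}, d_{n-1}) *)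
Record St := MkSt {
  sV2 : 'cV[R]_N; sV1 : 'cV[R]_N; sV0 : 'cV[R]_N;
  sW2 : 'cV[R]_N; sW1 : 'cV[R]_N; sW0 : 'cV[R]_N;
  sB1 : R; sD0 : R }.

Definition st_init : St := MkSt v1 v2 v3 w1 w2 w3 b1 d2.

Definition st_step (s : St) : St :=
  let bn1 := dotv (sW0 s) (Z *m sV0 s) in
  let cn1 := dotv (sW1 s) (Z *m sV0 s) in
  let vnew := Z *m sV0 s - bn1 *: sV0 s - cn1 *: sV1 s - sD0 s *: sV2 s in
  let what := Z *m sW1 s - cn1 *: sW0 s - sB1 s *: sW1 s - sW2 s in
  let dn := dotv (sW1 s) (Z *m vnew) in
  MkSt (sV1 s) (sV0 s) vnew (sW1 s) (sW0 s) (dn^-1 *: what) bn1 dn.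

(* stage k corresponds to n = k + 3 *)
Fixpoint stage (k : nat) : St :=
  if k is k'.+1 then st_step (stage k') else st_init.

(* 1-based sequences v_n, w_n (index 0 is unused junk) *)
Definition vseq (n : nat) : 'cV[R]_N :=
  match n with 0 => 0 | 1 => v1 | 2 => v2 | k.+3 => sV0 (stage k) end.
Definition wseq (n : nat) : 'cV[R]_N :=
  match n with 0 => 0 | 1 => w1 | 2 => w2 | k.+3 => sW0 (stage k) end.

(* coefficients: b_m = w_{m+1}^T Z v_{m+1}, c_m = w_m^T Z v_{m+1},
   d_m = w_{m-1}^T Z v_{m+1} (these are exactly the formulas of the
   recursion for b_0..b_{N-1}, c_1..c_{N-1}, d_2..d_{N-1}) *)
Definition bseq (m : nat) : R := dotv (wseq m.+1) (Z *m vseq m.+1).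
Definition cseq (m : nat) : R := dotv (wseq m) (Z *m vseq m.+1).
Definition dseq (m : nat) : R := dotv (wseq m.-1) (Z *m vseq m.+1).

(* the matrices produced by the recursion (0-based indices i, j) *)
Definition Wrec : 'M[R]_N := \matrix_(k < N, i < N) wseq i.+1 k 0.
Definition Vrec : 'M[R]_N := \matrix_(k < N, i < N) vseq i.+1 k 0.
Definition Hrec : 'M[R]_N := \matrix_(i < N, j < N)
  if j == i :> nat then bseq j
  else if i == j.+1 :> nat then 1
  else if j == i.+1 :> nat then cseq j
  else if j == i.+2 :> nat then dseq j
  else 0.

End Recursion.

Definition banded_hess (R : ringType) (N : nat) (H : 'M[R]_N) : Prop :=
  forall i j : 'I_N,
    ((i : nat) = j.+1 -> H i j = 1) /\
    ((j.+1 < i)%N \/ (i.+2 < j)%N -> H i j = 0).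

From Pilot Require Import Defs.
From mathcomp Require Import all_boot all_order all_algebra zify.
Import Order.TTheory GRing.Theory Num.Theory.
Set Implicit Arguments. Unset Strict Implicit. Unset Printing Implicit Defensive.
Local Open Scope ring_scope.

(* The z_i need not be distinct: only Z^T = Z is used.
   Existence: by induction on n, the vectors v_1..v_n and w_1..w_n produced
   by the recursion are biorthogonal; each new v_{n+1} (resp. w_{n+1}) is
   orthogonal to the earlier w_i (resp. v_j) because w_i^T Z v_j vanishes
   outside the band j-1 <= i <= j+2, which one reads off from the recursion
   for Z v_j and, via Z^T = Z, for Z w_i.  Then W^T Z V is the banded
   Hessenberg matrix of the coefficients.
   Uniqueness: for any solution, W^T V = I makes the columns of W (resp. V) a
   basis dual to those of V (resp. W), and W^T Z V = H says that the columns
   satisfy the same recursion with the same coefficients, so by induction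
   they coincide with the v_n, w_n. *)

Section Dotv.
Variables (R : comNzRingType) (N : nat).
Implicit Types (u v x : 'cV[R]_N) (k : R).

Lemma dotvDr u v x : dotv u (v + x) = dotv u v + dotv u x.
Proof. by rewrite /dotv mulmxDr mxE. Qed.

Lemma dotvDl u v x : dotv (v + x) u = dotv v u + dotv x u.
Proof. by rewrite /dotv linearD mulmxDl mxE. Qed.

Lemma dotvZr u v k : dotv u (k *: v) = k * dotv u v.
Proof. by rewrite /dotv -scalemxAr mxE. Qed.

Lemma dotvZl u v k : dotv (k *: v) u = k * dotv v u.
Proof. by rewrite /dotv linearZ -scalemxAl mxE. Qed.

Lemma dotvNr u v : dotv u (- v) = - dotv u v.
Proof. by rewrite -scaleN1r dotvZr mulN1r. Qed.

Lemma dotvNl u v : dotv (- v) u = - dotv v u.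
Proof. by rewrite -scaleN1r dotvZl mulN1r. Qed.

Lemma dotv0r u : dotv u 0 = 0.
Proof. by rewrite /dotv mulmx0 mxE. Qed.

Lemma dotv0l u : dotv 0 u = 0.
Proof. by rewrite /dotv trmx0 mul0mx mxE. Qed.

Lemma dotvBr u v x : dotv u (v - x) = dotv u v - dotv u x.
Proof. by rewrite dotvDr dotvNr. Qed.

Lemma dotvBl u v x : dotv (v - x) u = dotv v u - dotv x u.
Proof. by rewrite dotvDl dotvNl. Qed.

Lemma dotvC u v : dotv u v = dotv v u.
Proof. by rewrite /dotv -[v^T *m u]trmxK trmx_mul !trmxK [RHS]mxE. Qed.

Lemma dotvMl (A : 'M[R]_N) u v : dotv (A *m u) v = dotv u (A^T *m v).
Proof. by rewrite /dotv trmx_mul mulmxA. Qed.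

Lemma dotvMl_sym (A : 'M[R]_N) u v : A^T = A -> dotv (A *m u) v = dotv u (A *m v).
Proof. by move=> sA; rewrite dotvMl sA. Qed.

Lemma trmx_mulmx_dotv (A B : 'M[R]_N) i j :
  (A^T *m B) i j = dotv (col i A) (col j B).
Proof. by rewrite /dotv !mxE; apply: eq_bigr => k _; rewrite !mxE. Qed.

End Dotv.

Ltac decide_nat :=
  repeat match goal with
  | |- context [?a == ?b] =>
      (have -> : (a == b) = true by lia) || (have -> : (a == b) = false by lia)
  | |- context [leq ?a ?b] =>
      (have -> : leq a b = true by lia) || (have -> : leq a b = false by lia)
  end.

Section Recursion.
Variables (R : fieldType) (N : nat) (Z : 'M[R]_N) (w1 w2 v1 : 'cV[R]_N).
Local Notation v_ := (vseq Z w1 w2 v1).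
Local Notation w_ := (wseq Z w1 w2 v1).
Local Notation b_ := (Defs.bseq Z w1 w2 v1).
Local Notation c_ := (cseq Z w1 w2 v1).
Local Notation d_ := (dseq Z w1 w2 v1).

(* The fields of [stage k] equal the v_, w_, b_, d_ only propositionally, and
   inside the v_ computed at the next stage they must stay as they are; hence
   the occurrence-selective rewrites in the next three proofs. *)
Lemma stageE k :
  let s := stage Z w1 w2 v1 k in
  [/\ sV2 s = v_ k.+1, sV1 s = v_ k.+2, sW2 s = w_ k.+1 & sW1 s = w_ k.+2]
  /\ sB1 s = b_ k.+1 /\ sD0 s = d_ k.+2.
Proof.
elim: k => [|k [[_ eV1 _ eW1] _]]; first by [].
split; first by split.
by split=> //; rewrite /= {1}eW1.
Qed.

Lemma vseq_rec m :
  v_ m.+2 = Z *m v_ m.+1 - b_ m *: v_ m.+1 - c_ m *: v_ m - d_ m *: v_ m.-1.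
Proof.
case: m => [|[|k]]; rewrite ?scaler0 ?subr0 //.
by case: (stageE k) => [[eV2 eV1 _ eW1] [_ eD0]]; rewrite [LHS]/= eV2 eV1 eW1 eD0.
Qed.

Lemma wseq_rec m : (0 < m)%N ->
  w_ m.+2 = (d_ m.+1)^-1 *: (Z *m w_ m - c_ m *: w_ m.+1 - b_ m.-1 *: w_ m - w_ m.-1).
Proof.
case: m => [|[|k]] // _; first by rewrite subr0.
case: (stageE k) => [[_ _ eW2 eW1] [eB1 _]].
by rewrite [LHS]/=; set vn := (Z *m _ - _ - _ - _); rewrite eW2 eW1 eB1.
Qed.

Lemma mulmx_vseq m :
  Z *m v_ m.+1 = v_ m.+2 + d_ m *: v_ m.-1 + c_ m *: v_ m + b_ m *: v_ m.+1.
Proof. by rewrite vseq_rec !subrK. Qed.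

Lemma mulmx_wseq m : (0 < m)%N -> d_ m.+1 != 0 ->
  Z *m w_ m = d_ m.+1 *: w_ m.+2 + w_ m.-1 + b_ m.-1 *: w_ m + c_ m *: w_ m.+1.
Proof. by move=> m_gt0 dn0; rewrite wseq_rec // scalerA mulfV // scale1r !subrK. Qed.

Lemma banded_hess_Hrec : banded_hess (Hrec Z w1 w2 v1).
Proof. by move=> i j; rewrite mxE; split=> ij; decide_nat. Qed.

Lemma col_Wrec (i : 'I_N) : col i (Wrec Z w1 w2 v1) = w_ i.+1.
Proof. by apply/colP => r; rewrite !mxE. Qed.

Lemma col_Vrec (i : 'I_N) : col i (Vrec Z w1 w2 v1) = v_ i.+1.
Proof. by apply/colP => r; rewrite !mxE. Qed.

End Recursion.

(* Index 0 stands for the junk vector 0 of [vseq] and [wseq], hence [0 < i]. *)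
Definition delta {R : nzRingType} (i j : nat) : R := ((i == j) && (0 < i)%N)%:R.

Ltac simpl_delta :=
  rewrite /delta; decide_nat; cbn [andb nat_of_bool];
  rewrite ?(mulr1n, mulr0n, mulr0, mulr1, mul0r, mul1r,
            addr0, add0r, subr0, sub0r, oppr0).

Ltac expand_dotv :=
  rewrite ?(dotvDr, dotvNr, dotvZr, dotvDl, dotvNl, dotvZl, dotv0r, dotv0l).

Section Biorthogonality.
Variables (R : fieldType) (N : nat) (Z : 'M[R]_N) (w1 w2 v1 : 'cV[R]_N).
Hypothesis Z_sym : Z^T = Z.
Hypotheses (w1v1 : dotv w1 v1 = 1) (w2v1 : dotv w2 v1 = 0).
Hypothesis w2Zv1 : dotv w2 (Z *m v1) = 1.
Hypothesis d_neq0 : forall n, (2 <= n <= N.-1)%N -> dseq Z w1 w2 v1 n != 0.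
Local Notation v_ := (vseq Z w1 w2 v1).
Local Notation w_ := (wseq Z w1 w2 v1).
Local Notation b_ := (Defs.bseq Z w1 w2 v1).
Local Notation c_ := (cseq Z w1 w2 v1).
Local Notation d_ := (dseq Z w1 w2 v1).

Definition biorth n :=
  forall i j, (i <= n)%N -> (j <= n)%N -> dotv (w_ i) (v_ j) = delta i j.

Lemma biorth2 : biorth 2.
Proof.
move=> [|[|[|i]]] [|[|[|j]]] //= _ _; rewrite /delta /= ?dotv0l ?dotv0r //.
- by rewrite /v2 dotvBr dotvZr w1v1 mulr1 subrr.
- by rewrite /v2 dotvBr dotvZr w2v1 mulr0 subr0.
Qed.

Section Pattern.
Variable n : nat.
Hypothesis biorth_n : biorth n.

Lemma dotv_wseq_Zvseq_sub j : (j.+2 <= n)%N -> dotv (w_ j.+2) (Z *m v_ j.+1) = 1.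
Proof.
by move=> jn; rewrite mulmx_vseq; expand_dotv; rewrite !biorth_n; try lia; simpl_delta.
Qed.

Lemma dotv_wseq_Zvseq_below i j :
  (i <= n)%N -> (j.+2 < i)%N -> dotv (w_ i) (Z *m v_ j.+1) = 0.
Proof.
by move=> *; rewrite mulmx_vseq; expand_dotv; rewrite !biorth_n; try lia; simpl_delta.
Qed.

Lemma dotv_wseq_Zvseq_above i j : (n <= N)%N ->
  (j <= n)%N -> (i.+3 < j)%N -> dotv (w_ i.+1) (Z *m v_ j) = 0.
Proof.
move=> *; rewrite -dotvMl_sym // (mulmx_wseq (m := i.+1)) //; last by apply: d_neq0; lia.
by expand_dotv; rewrite !biorth_n; try lia; simpl_delta.
Qed.

End Pattern.

Section Step.
Variable p : nat.
Hypotheses (pN : (p.+3 <= N)%N) (biorth_p : biorth p.+2).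

Lemma dotv_wseq_vseq_next i : (i <= p.+2)%N -> dotv (w_ i) (v_ p.+3) = 0.
Proof.
case: i => [|i] im; first by rewrite dotv0l.
rewrite vseq_rec; expand_dotv; rewrite !biorth_p; try lia.
have [lt_im | ge_im] := ltnP i.+1 p.
  by rewrite (dotv_wseq_Zvseq_above biorth_p); try lia; simpl_delta.
have : p = i.+1 \/ i = p \/ i = p.+1 by lia.
by case=> [|[|]] ->; simpl_delta; apply: subrr.
Qed.

Lemma dotv_wseq_next_vseq j : (j <= p.+2)%N -> dotv (w_ p.+3) (v_ j) = 0.
Proof.
case: j => [|j] jm; first by rewrite dotv0r.
rewrite wseq_rec // dotvZl; apply/eqP; rewrite mulf_eq0; apply/orP; right; apply/eqP.
expand_dotv; rewrite dotvMl_sym // !biorth_p; try lia.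
have [lt_jm | ge_jm] := ltnP j.+1 p.
  by rewrite (dotv_wseq_Zvseq_below biorth_p); try lia; simpl_delta.
have : p = j.+1 \/ j = p \/ j = p.+1 by lia.
case=> [pj | [-> | ->]]; simpl_delta; try exact: subrr.
by rewrite pj (dotv_wseq_Zvseq_sub biorth_p); [apply: subrr | lia].
Qed.

Lemma dotv_wseq_vseq_next_diag : dotv (w_ p.+3) (v_ p.+3) = 1.
Proof.
rewrite wseq_rec // dotvZl; expand_dotv.
rewrite dotvMl_sym // !dotv_wseq_vseq_next; try lia.
rewrite !mulr0 !subr0.
by apply: mulVf; apply: d_neq0; lia.
Qed.

Lemma biorth_step : biorth p.+3.
Proof.
move=> i j; rewrite leq_eqVlt ltnS => /predU1P[-> | ilt];
  rewrite leq_eqVlt ltnS => /predU1P[-> | jlt].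
- by rewrite dotv_wseq_vseq_next_diag; simpl_delta.
- by rewrite dotv_wseq_next_vseq //; simpl_delta.
- by rewrite dotv_wseq_vseq_next //; simpl_delta.
- exact: biorth_p.
Qed.

End Step.

Lemma biorth_upto k : (k <= N - 2)%N -> biorth k.+2.
Proof.
elim: k => [|k IH] kN; first exact: biorth2.
by apply: biorth_step; [lia | apply: IH; lia].
Qed.

Lemma biorth_N : biorth N.
Proof. by move=> i j *; apply: (biorth_upto (k := N - 2)); lia. Qed.

Lemma dotv_wseq_Zvseq_Hrec (i j : 'I_N) :
  dotv (w_ i.+1) (Z *m v_ j.+1) = Hrec Z w1 w2 v1 i j.
Proof.
have iN := ltn_ord i; have jN := ltn_ord j; rewrite mxE.
case: eqP => [-> | ji]; first reflexivity.
case: eqP => [ij1 | ij1]; first by rewrite ij1 (dotv_wseq_Zvseq_sub biorth_N) //; lia.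
case: eqP => [-> | ji1]; first reflexivity.
case: eqP => [-> | ji2]; first reflexivity.
have [below | above] : (j.+1 < i)%N \/ (i.+2 < j)%N by lia.
  by rewrite (dotv_wseq_Zvseq_below biorth_N) //; lia.
by rewrite (dotv_wseq_Zvseq_above biorth_N) //; lia.
Qed.

Lemma recursion_solves :
  banded_hess (Hrec Z w1 w2 v1) /\
  ((forall i : 'I_N, (i : nat) = 0%N -> col i (Wrec Z w1 w2 v1) = w1) /\
   (forall i : 'I_N, (i : nat) = 1%N -> col i (Wrec Z w1 w2 v1) = w2) /\
   (forall i : 'I_N, (i : nat) = 0%N -> col i (Vrec Z w1 w2 v1) = v1)) /\
  (Wrec Z w1 w2 v1)^T *m Vrec Z w1 w2 v1 = 1%:M /\
  (Wrec Z w1 w2 v1)^T *m Z *m Vrec Z w1 w2 v1 = Hrec Z w1 w2 v1.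
Proof.
split; first exact: banded_hess_Hrec.
split; first by split; [|split] => i i_val; rewrite ?col_Wrec ?col_Vrec i_val.
split; apply/matrixP => i j; rewrite ?trmx_mulmx_dotv ?col_Wrec ?col_Vrec.
  by rewrite biorth_N // mxE /delta /= andbT.
rewrite -mulmxA trmx_mulmx_dotv col_Wrec -dotv_wseq_Zvseq_Hrec.
by rewrite colE -mulmxA -colE col_Vrec.
Qed.

End Biorthogonality.

Section Col1.
Variables (R : nmodType) (m n : nat).
Implicit Type A : 'M[R]_(m, n).

(* The columns of A numbered from 1, as for [vseq]; 0 outside 1..n. *)
Definition col1 A (k : nat) : 'cV[R]_m :=
  if k is k'.+1 then if insub k' is Some j then col j A else 0 else 0.

Lemma col1S A (j : 'I_n) : col1 A j.+1 = col j A.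
Proof. by rewrite /= valK. Qed.

Lemma col1_eq0 A k : ~~ (0 < k <= n)%N -> col1 A k = 0.
Proof. by case: k => [|k] kn //=; rewrite insubF //; lia. Qed.

Lemma col1_ord k : (0 < k <= n)%N -> {j : 'I_n | k = j.+1}.
Proof.
case: k => [|k] kn //; have kn' : (k < n)%N by lia.
by exists (Ordinal kn').
Qed.

End Col1.

Lemma col1_orth_eq0 (R : comUnitRingType) (N : nat) (A B : 'M[R]_N) x :
  A^T *m B = 1%:M -> (forall i, (0 < i <= N)%N -> dotv (col1 A i) x = 0) -> x = 0.
Proof.
move=> AB orth; have Ax : A^T *m x = 0.
  apply/colP => a; rewrite [RHS]mxE -(orth a.+1); last by have := ltn_ord a; lia.
  by rewrite col1S /dotv !mxE; apply: eq_bigr => k _; rewrite !mxE.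
by rewrite -[x]mul1mx -(mulmx1C AB) -mulmxA Ax mulmx0.
Qed.

Lemma eq_upto_succ (T : Type) (f g : nat -> T) m :
  (forall k, (k <= m)%N -> f k = g k) -> f m.+1 = g m.+1 ->
  forall k, (k <= m.+1)%N -> f k = g k.
Proof. by move=> efg em k; rewrite leq_eqVlt ltnS => /predU1P[-> // | /efg]. Qed.

Section Uniqueness.
Variables (R : fieldType) (N : nat) (Z : 'M[R]_N) (w1 w2 v1 : 'cV[R]_N).
Hypothesis Z_sym : Z^T = Z.
Hypothesis d_neq0 : forall n, (2 <= n <= N.-1)%N -> dseq Z w1 w2 v1 n != 0.
Variables W V H : 'M[R]_N.
Hypothesis H_banded : banded_hess H.
Hypothesis W_col0 : forall i : 'I_N, (i : nat) = 0%N -> col i W = w1.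
Hypothesis W_col1 : forall i : 'I_N, (i : nat) = 1%N -> col i W = w2.
Hypothesis V_col0 : forall i : 'I_N, (i : nat) = 0%N -> col i V = v1.
Hypotheses (WV : W^T *m V = 1%:M) (WZV : W^T *m Z *m V = H).
Local Notation v_ := (vseq Z w1 w2 v1).
Local Notation w_ := (wseq Z w1 w2 v1).
Local Notation b_ := (Defs.bseq Z w1 w2 v1).
Local Notation c_ := (cseq Z w1 w2 v1).
Local Notation d_ := (dseq Z w1 w2 v1).

Lemma trmxV_mulmxW : V^T *m W = 1%:M.
Proof. by rewrite -[W]trmxK -trmx_mul WV trmx1. Qed.

Lemma dotv_col1 i j : (i <= N)%N -> (j <= N)%N ->
  dotv (col1 W i) (col1 V j) = delta i j.
Proof.
case: i => [|i] iN; first by rewrite dotv0l /delta andbF.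
case: j => [|j] jN; first by rewrite dotv0r /delta; decide_nat.
have iN' : (i < N)%N by lia.
have jN' : (j < N)%N by lia.
rewrite (col1S W (Ordinal iN')) (col1S V (Ordinal jN')) -trmx_mulmx_dotv WV.
by rewrite mxE /delta /= andbT.
Qed.

Lemma dotv_col1_Zcol1 (a b : 'I_N) : dotv (col1 W a.+1) (Z *m col1 V b.+1) = H a b.
Proof. by rewrite !col1S -WZV -mulmxA trmx_mulmx_dotv !colE mulmxA. Qed.

Lemma dotv_col1_Zcol1_sub j : (0 < j < N)%N -> dotv (col1 W j.+1) (Z *m col1 V j) = 1.
Proof.
case: j => [// | j] jN; have jN' : (j.+1 < N)%N by lia.
by rewrite (dotv_col1_Zcol1 (Ordinal jN') (Ordinal (ltnW jN'))); apply: (H_banded _ _).1.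
Qed.

Lemma dotv_col1_Zcol1_out i j : (j.+1 < i)%N \/ (i.+2 < j)%N ->
  dotv (col1 W i) (Z *m col1 V j) = 0.
Proof.
case: (boolP (0 < i <= N)%N) => [/col1_ord[a ->] | iout].
  2: by rewrite col1_eq0 // dotv0l.
case: (boolP (0 < j <= N)%N) => [/col1_ord[b ->] | jout].
  2: by rewrite (col1_eq0 V jout) mulmx0 dotv0r.
by move=> ab; rewrite dotv_col1_Zcol1; apply: (H_banded a b).2; lia.
Qed.

Lemma col1V_next p : (p.+2 <= N)%N ->
  (forall k, (k <= p.+1)%N -> col1 W k = w_ k) ->
  (forall k, (k <= p.+1)%N -> col1 V k = v_ k) -> col1 V p.+2 = v_ p.+2.
Proof.
move=> pN eW eV; apply/eqP; rewrite -subr_eq0; apply/eqP.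
apply: (col1_orth_eq0 WV) => i iN.
have eB : b_ p = dotv (col1 W p.+1) (Z *m col1 V p.+1).
  by rewrite /Defs.bseq eW ?eV.
have eC : c_ p = dotv (col1 W p) (Z *m col1 V p.+1) by rewrite /cseq eW ?eV.
have eD : d_ p = dotv (col1 W p.-1) (Z *m col1 V p.+1).
  by rewrite /dseq eW ?eV //; lia.
rewrite dotvBr dotv_col1; try lia.
rewrite vseq_rec; expand_dotv; rewrite -!eV ?eB ?eC ?eD; try lia.
rewrite !dotv_col1; try lia.
have : i = p.+2 \/ i = p.+1 \/ i = p \/ i = p.-1 \/ (p.+2 < i)%N \/ (i.+2 < p.+1)%N.
  by lia.
case=> [e | [e | [e | [e | out]]]]; try subst i; simpl_delta;
  try by rewrite subrr oppr0.
- by rewrite dotv_col1_Zcol1_sub ?subrr //; lia.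
- by rewrite (dotv_col1_Zcol1_out out) oppr0.
Qed.

Lemma col1W_next q : (q.+3 <= N)%N ->
  (forall k, (k <= q.+2)%N -> col1 W k = w_ k) ->
  (forall k, (k <= q.+3)%N -> col1 V k = v_ k) -> col1 W q.+3 = w_ q.+3.
Proof.
move=> qN eW eV; apply/eqP; rewrite -subr_eq0; apply/eqP.
apply: (col1_orth_eq0 trmxV_mulmxW) => j jN; rewrite dotvC.
have eB : b_ q = dotv (col1 W q.+1) (Z *m col1 V q.+1).
  by rewrite /Defs.bseq eW ?eV //; lia.
have eC : c_ q.+1 = dotv (col1 W q.+1) (Z *m col1 V q.+2).
  by rewrite /cseq eW ?eV //; lia.
have eD : d_ q.+2 = dotv (col1 W q.+1) (Z *m col1 V q.+3).
  by rewrite /dseq eW ?eV //; lia.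
have dD : dotv (col1 W q.+1) (Z *m col1 V q.+3) != 0.
  by rewrite -eD; apply: d_neq0; lia.
rewrite dotvBl dotv_col1; try lia.
rewrite wseq_rec // dotvZl; expand_dotv; rewrite dotvMl_sym // -!eW ?eB ?eC ?eD; try lia.
rewrite !dotv_col1; try lia.
have : j = q.+3 \/ j = q.+2 \/ j = q.+1 \/ j = q \/ (j.+1 < q.+1)%N \/ (q.+3 < j)%N.
  by lia.
case=> [e | [e | [e | [e | out]]]]; try subst j; simpl_delta;
  try by rewrite subrr mulr0 oppr0.
- by rewrite mulVf // subrr.
- by rewrite dotv_col1_Zcol1_sub ?subrr ?mulr0 ?oppr0 //; lia.
- by rewrite (dotv_col1_Zcol1_out out) mulr0 oppr0.
Qed.

Lemma col1_rec n : (n <= N)%N ->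
  (forall k, (k <= n)%N -> col1 W k = w_ k) /\ (forall k, (k <= n)%N -> col1 V k = v_ k).
Proof.
elim: n => [|n IH] nN; first by split=> k; rewrite leqn0 => /eqP ->.
have [eW eV] := IH (ltnW nN).
case: n nN eW eV {IH} => [|p] pN eW eV.
  split; apply: eq_upto_succ => //; rewrite (col1S _ (Ordinal pN)).
  - exact: W_col0.
  - exact: V_col0.
have eV' := eq_upto_succ eV (col1V_next pN eW eV).
split=> //; refine (eq_upto_succ eW _).
case: p pN eW eV eV' => [|q] qN eW _ eV'; last exact: col1W_next.
by rewrite (col1S _ (Ordinal qN)); apply: W_col1.
Qed.

Lemma solution_eq_rec : W = Wrec Z w1 w2 v1 /\ V = Vrec Z w1 w2 v1.
Proof.
have [eW eV] := col1_rec (leqnn N).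
split; apply: trmx_inj; apply/row_matrixP => k; rewrite -!tr_col.
  by rewrite col_Wrec -col1S eW.
by rewrite col_Vrec -col1S eV.
Qed.

End Uniqueness.

Theorem proposition4p2 (R : realFieldType) (N : nat) (z : 'I_N -> R)
    (w1 w2 v1 : 'cV[R]_N) :
  injective z ->
  dotv w1 v1 = 1 ->
  dotv w2 v1 = 0 ->
  dotv w2 (diagZ z *m v1) = 1 ->
  (forall n : nat, (2 <= n <= N.-1)%N -> dseq (diagZ z) w1 w2 v1 n != 0) ->
  forall W V H : 'M[R]_N,
    (banded_hess H /\
     ((forall i : 'I_N, (i : nat) = 0%N -> col i W = w1) /\
      (forall i : 'I_N, (i : nat) = 1%N -> col i W = w2) /\
      (forall i : 'I_N, (i : nat) = 0%N -> col i V = v1)) /\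
     W^T *m V = 1%:M /\
     W^T *m diagZ z *m V = H)
    <->
    (W = Wrec (diagZ z) w1 w2 v1 /\ V = Vrec (diagZ z) w1 w2 v1 /\
     H = Hrec (diagZ z) w1 w2 v1).
Proof.
move=> _ w1v1 w2v1 w2Zv1 d_neq0 W V H.
have Z_sym : (diagZ z)^T = diagZ z by rewrite /diagZ tr_diag_mx.
have rec_solves := recursion_solves Z_sym w1v1 w2v1 w2Zv1 d_neq0.
split=> [[H_banded [[W_col0 [W_col1 V_col0]] [WV WZV]]] | [-> [-> ->]]] //.
have [eW eV] := solution_eq_rec Z_sym d_neq0 H_banded W_col0 W_col1 V_col0 WV WZV.
split=> //; split=> //.
by case: rec_solves => _ [_ [_ <-]]; rewrite -WZV eW eV.
Qed.
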